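(* Let $\mathcal M$ be an o-minimal structure in a language $\mathcal L$ with universe $M$, and $\mathcal N$ an expansion of $\mathcal M$ such that every open definable set is $\mathcal L$-definable and $\mathcal N$ admits a dimension function $\dim$ compatible with $\mathcal M$. Let $X\subseteq M^n$ be strongly large of dimension $k$. Then every definable map $f:X\to M$ agrees with an $\mathcal L$-definable map $F:M^n\to M$ outside a definable set $S$ of dimension $<k$.
   Context: ''Definable'' means definable in $\mathcal N$ with parameters; ''$\mathcal L$-definable'' means definable in $\mathcal M$ with parameters. A dimension function compatible with $\mathcal M$ is a map $\dim$ from definable sets to $\{-\infty\}\cup\mathbb N$ such that for all definable $X,Y\subseteq M^n$, $a\in M$: (D1) $\dim\{a\}=0$, $\dim M=1$, $\dim X=-\infty$ iff $X=\emptyset$; (D2) $\dim(X\cup Y)=\max\{\dim X,\dim Y\}$; (D3) for a definable family $\{X_t\}_{t\in I}$ of pairwise disjoint sets: (a) each $\{t\in I:\dim X_t=d\}$ is definable; (b) if all $X_t$ have dimension $k$ then $\dim\bigcup_t X_t=\dim I+k$; (D4) definable bijections preserve $\dim$; (D5) on $\mathcal L$-definable sets $\dim$ is the o-minimal dimension; (D6) every definable $f:M^n\to M$ agrees with an $\mathcal L$-definable $F:M^n\to M$ outside a definable set of dimension $<n$. $cl$ denotes topological closure; a definable set $X$ is strongly large if $\dim X=\dim cl(X)$. *)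

From mathcomp Require Import all_boot.

Set Implicit Arguments.
Unset Strict Implicit.
Unset Printing Implicit Defensive.

Definition tup (M : Type) (n : nat) := 'I_n -> M.
Definition pset (M : Type) (n : nat) := tup M n -> Prop.

Definition concat (M : Type) (m n : nat) (x : tup M m) (y : tup M n) : tup M (m + n) :=
  fun i => match split i with inl j => x j | inr j => y j end.

Definition fstp (M : Type) (m n : nat) (z : tup M (m + n)) : tup M m :=
  fun i => z (lshift n i).
Definition sndp (M : Type) (m n : nat) (z : tup M (m + n)) : tup M n :=
  fun j => z (rshift m j).

Definition snoc (M : Type) (n : nat) (x : tup M n) (y : M) : tup M n.+1 :=
  fun i => match unlift ord_max i with Some j => x j | None => y end.

Definition graph (M : Type) (n m : nat) (X : pset M n) (f : tup M n -> tup M m)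
  : pset M (n + m) :=
  fun z => X (fstp z) /\ forall j, sndp z j = f (fstp z) j.

Definition fiber (M : Type) (m n : nat) (Z : pset M (m + n)) (t : tup M m) : pset M n :=
  fun x => Z (concat t x).

Definition cproj (M : Type) (d n : nat) (sigma : 'I_d -> 'I_n) (X : pset M n) : pset M d :=
  fun y => exists x, X x /\ forall i, y i = x (sigma i).

Record is_structure (M : Type) (D : forall n, pset M n -> Prop) : Prop := {
  st_empty : forall n, D n (fun _ => False);
  st_compl : forall n (A : pset M n), D n A -> D n (fun x => ~ A x);
  st_union : forall n (A B : pset M n), D n A -> D n B -> D n (fun x => A x \/ B x);
  st_prodl : forall n (A : pset M n), D n A -> D n.+1 (fun x => A (fun i => x (lift ord0 i)));
  st_prodr : forall n (A : pset M n), D n A -> D n.+1 (fun x => A (fun i => x (lift ord_max i)));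
  st_diag : forall n (i j : 'I_n), D n (fun x => x i = x j);
  st_proj : forall n (A : pset M n.+1), D n.+1 A -> D n (fun x => exists y, A (snoc x y));
  (* parameters: singletons are definable *)
  st_point : forall a : M, D 1 (fun x => x ord0 = a)
}.

Record dlo (M : Type) (lt : M -> M -> Prop) : Prop := {
  dlo_inhab : inhabited M;
  dlo_irrefl : forall x, ~ lt x x;
  dlo_trans : forall x y z, lt x y -> lt y z -> lt x z;
  dlo_total : forall x y, lt x y \/ x = y \/ lt y x;
  dlo_dense : forall x y, lt x y -> exists z, lt x z /\ lt z y;
  dlo_nomax : forall x, exists y, lt x y;
  dlo_nomin : forall x, exists y, lt y x
}.

(* open interval with endpoints in M u {-oo, +oo} (None = infinite) *)
Definition in_interval (M : Type) (lt : M -> M -> Prop)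
  (I : option M * option M) (x : M) : Prop :=
  (match I.1 with Some a => lt a x | None => True end) /\
  (match I.2 with Some b => lt x b | None => True end).

Record o_minimal (M : Type) (lt : M -> M -> Prop) (D : forall n, pset M n -> Prop) : Prop := {
  om_struct : is_structure D;
  om_dlo : dlo lt;
  om_lt : D 2 (fun x => lt (x ord0) (x ord_max));
  om_omin : forall A : pset M 1, D 1 A ->
    exists (p q : nat) (pts : 'I_p -> M) (ivs : 'I_q -> option M * option M),
      forall x : tup M 1,
        A x <-> ((exists i, x ord0 = pts i) \/ (exists j, in_interval lt (ivs j) (x ord0)))
}.

Definition expands (M : Type) (DM DN : forall n, pset M n -> Prop) : Prop :=
  forall n (A : pset M n), DM n A -> DN n A.

Definition box (M : Type) (lt : M -> M -> Prop) (n : nat) (a b : tup M n) : pset M n :=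
  fun x => forall i, lt (a i) (x i) /\ lt (x i) (b i).

Definition is_open (M : Type) (lt : M -> M -> Prop) (n : nat) (U : pset M n) : Prop :=
  forall x, U x -> exists a b : tup M n, box lt a b x /\ forall y, box lt a b y -> U y.

Definition closure (M : Type) (lt : M -> M -> Prop) (n : nat) (X : pset M n) : pset M n :=
  fun x => forall a b : tup M n, box lt a b x -> exists y, box lt a b y /\ X y.

Definition has_interior (M : Type) (lt : M -> M -> Prop) (n : nat) (X : pset M n) : Prop :=
  exists x, X x /\ exists a b : tup M n, box lt a b x /\ forall y, box lt a b y -> X y.

Definition open_definable_L (M : Type) (lt : M -> M -> Prop)
  (DM DN : forall n, pset M n -> Prop) : Prop :=
  forall n (U : pset M n), DN n U -> is_open lt U -> DM n U.

(* Dimensions: values in {-oo} u N, encoded as option nat (None = -oo) *)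

Definition omax (a b : option nat) : option nat :=
  match a, b with
  | None, _ => b
  | _, None => a
  | Some x, Some y => Some (maxn x y)
  end.

Definition oadd (a b : option nat) : option nat :=
  match a, b with
  | Some x, Some y => Some (x + y)
  | _, _ => None
  end.

Definition olt (a : option nat) (k : nat) : Prop :=
  match a with None => True | Some x => x < k end.

Definition odim (M : Type) (lt : M -> M -> Prop) (n : nat) (X : pset M n)
  (o : option nat) : Prop :=
  match o with
  | None => forall x, ~ X x
  | Some d =>
      (exists sigma : 'I_d -> 'I_n, injective sigma /\ has_interior lt (cproj sigma X)) /\
      (forall d' (sigma : 'I_d' -> 'I_n), injective sigma ->
          has_interior lt (cproj sigma X) -> d' <= d)
  end.

Record dim_compatible (M : Type) (lt : M -> M -> Prop)
  (DM DN : forall n, pset M n -> Prop) (dim : forall n, pset M n -> option nat) : Prop := {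
  D1_point : forall a : M, dim 1 (fun x => x ord0 = a) = Some 0;
  D1_line : dim 1 (fun _ => True) = Some 1;
  D1_empty : forall n (X : pset M n), DN n X -> (dim n X = None <-> forall x, ~ X x);
  D2 : forall n (X Y : pset M n), DN n X -> DN n Y ->
         dim n (fun x => X x \/ Y x) = omax (dim n X) (dim n Y);
  (* (D3) definable families {X_t}_{t in I}, X_t = fibre of Z over t *)
  D3a : forall m n (I : pset M m) (Z : pset M (m + n)), DN m I -> DN (m + n) Z ->
         (forall t t', I t -> I t' -> t <> t' -> forall x, ~ (fiber Z t x /\ fiber Z t' x)) ->
         forall d : option nat, DN m (fun t => I t /\ dim n (fiber Z t) = d);
  D3b : forall m n (I : pset M m) (Z : pset M (m + n)), DN m I -> DN (m + n) Z ->
         (forall t t', I t -> I t' -> t <> t' -> forall x, ~ (fiber Z t x /\ fiber Z t' x)) ->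
         forall k : option nat, (forall t, I t -> dim n (fiber Z t) = k) ->
         dim n (fun x => exists t, I t /\ fiber Z t x) = oadd (dim m I) k;
  D4 : forall n m (X : pset M n) (Y : pset M m) (f : tup M n -> tup M m),
         DN n X -> DN m Y -> DN (n + m) (graph X f) ->
         (forall x, X x -> Y (f x)) ->
         (forall x x', X x -> X x' -> f x = f x' -> x = x') ->
         (forall y, Y y -> exists x, X x /\ f x = y) ->
         dim n X = dim m Y;
  D5 : forall n (X : pset M n), DM n X -> odim lt X (dim n X);
  D6 : forall n (f : tup M n -> M),
         DN (n + 1) (graph (fun _ => True) (fun x (_ : 'I_1) => f x)) ->
         exists F : tup M n -> M,
           DM (n + 1) (graph (fun _ => True) (fun x (_ : 'I_1) => F x)) /\
           exists S : pset M n, DN n S /\ olt (dim n S) n /\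
             forall x, ~ S x -> f x = F x
}.

Definition strongly_large (M : Type) (lt : M -> M -> Prop)
  (DN : forall n, pset M n -> Prop) (dim : forall n, pset M n -> option nat)
  (n : nat) (X : pset M n) : Prop :=
  DN n X /\ dim n X = dim n (closure lt X).

(* Induction on the number i of leading coordinates on which an L-definable set C containing X
   depends: for every definable f on X there is an L-definable F agreeing with f off a set of
   dimension < dim C.  The theorem is the case C = cl(X), which is L-definable because its
   complement is open, and has dimension k because X is strongly large.
   If C depends on the coordinates < i+1, split C according to whether its fibre along
   coordinate i contains an interval.  Saturating the thick part along coordinate i keeps its
   dimension and removes the dependence on coordinate i.  The thin part has finite fibres;
   saturating it raises the dimension by one, and f is transported to the saturation by
   evaluating it at the next point of the fibre above.  The approximation Fn found there is
   glued back: at a point x of the thin part take the value Fn has on almost all of an interval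
   just below x_i.  Where this disagrees with f, an interval's worth of disagreements of Fn lies
   below x, so by (D3) such x form a set of dimension < dim (thin part). *)

From Pilot Require Import Defs.
From mathcomp Require Import all_boot zify.
From Stdlib Require Import FunctionalExtensionality PropExtensionality ClassicalEpsilon Classical.

Set Implicit Arguments.
Unset Strict Implicit.
Unset Printing Implicit Defensive.

Lemma pset_ext (M : Type) n (A B : pset M n) : (forall x, A x <-> B x) -> A = B.
Proof.
by move=> AB; apply: functional_extensionality => x; apply: propositional_extensionality.
Qed.

Lemma tup_ext (M : Type) n (x y : tup M n) : (forall i, x i = y i) -> x = y.
Proof. exact: functional_extensionality. Qed.

Lemma D_equiv (M : Type) (D : forall n, pset M n -> Prop) n (A B : pset M n) :
  (forall x, A x <-> B x) -> D n A -> D n B.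
Proof. by move=> AB; rewrite (pset_ext AB). Qed.

Lemma ord1_eq (o : 'I_1) : o = ord0.
Proof. by apply: val_inj; case: o => [[|]]. Qed.

Lemma fstp_concat (M : Type) m n (t : tup M m) (x : tup M n) : fstp (concat t x) = t.
Proof.
apply: tup_ext => j; rewrite /fstp /concat; case: splitP => j' /= E.
  by congr t; exact: val_inj.
by have := ltn_ord j; lia.
Qed.

Lemma sndp_concat (M : Type) m n (t : tup M m) (x : tup M n) : sndp (concat t x) = x.
Proof.
apply: tup_ext => j; rewrite /sndp /concat; case: splitP => j' /= E.
  by have := ltn_ord j'; lia.
by congr x; apply: val_inj => /=; lia.
Qed.

Definition upd (M : Type) n (i : 'I_n) (x : tup M n) (u : M) : tup M n :=
  fun j => if j == i then u else x j.

Section Update.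
Variables (M : Type) (n : nat) (i : 'I_n) (x : tup M n).

Lemma upd_at u : upd i x u i = u.
Proof. by rewrite /upd eqxx. Qed.

Lemma upd_ne u j : j != i -> upd i x u j = x j.
Proof. by rewrite /upd => /negbTE ->. Qed.

Lemma upd_id : upd i x (x i) = x.
Proof. by apply: tup_ext => j; rewrite /upd; case: eqP => [->|]. Qed.

Lemma upd_upd u u' : upd i (upd i x u) u' = upd i x u'.
Proof. by apply: tup_ext => j; rewrite /upd; case: eqP. Qed.

End Update.

Section Formulas.
Context {M : Type} {D : forall n, pset M n -> Prop} {a0 : M}.
Arguments D : clear implicits.
Hypothesis HD : is_structure D.

(* A formula with free variables among 0, ..., k-1 is a predicate on valuations [nat -> M];
   variable [p] is read as coordinate [k - p.+1] of a point of M^k, so that the last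
   coordinate, which projection eliminates, is variable 0.  Variables from k on read [a0]. *)
Definition env k (x : tup M k) : nat -> M :=
  fun p => if p < k then oapp x a0 (insub (k - p.+1)) else a0.
Definition tup_of k (v : nat -> M) : tup M k := fun j => v (k - j.+1).
Arguments tup_of : clear implicits.
Definition vshift a (v : nat -> M) : nat -> M := fun p => v (a + p).
Definition vcons (y : M) (v : nat -> M) : nat -> M :=
  fun p => if p is p'.+1 then v p' else y.

Lemma env_ord k (x : tup M k) (j : 'I_k) : env x (k - j.+1) = x j.
Proof.
rewrite /env; have := ltn_ord j => lt_jk.
have -> : (k - j.+1 < k) = true by apply/idP; lia.
have -> : k - (k - j.+1).+1 = j by lia.
by rewrite valK.
Qed.

Lemma env_rev k (x : tup M k) p (lt_pk : p < k) : env x p = x (rev_ord (Ordinal lt_pk)).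
Proof. by rewrite -env_ord /=; congr env; lia. Qed.

Lemma env_ge k (x : tup M k) p : k <= p -> env x p = a0.
Proof. by move=> le_kp; rewrite /env ltnNge le_kp. Qed.

Lemma tup_of_env k (x : tup M k) : tup_of k (env x) = x.
Proof. by apply: tup_ext => j; exact: env_ord. Qed.

Lemma env_snoc k (x : tup M k) y : env (snoc x y) = vcons y (env x).
Proof.
apply: functional_extensionality => -[|p] /=.
  rewrite (env_rev _ (ltn0Sn k)) /snoc; case: unliftP => [j /(congr1 val) /= E|//].
  by have := ltn_ord j; move: E; rewrite /bump /=; case: leqP; lia.
have [lt_pk|le_kp] := ltnP p k; last by rewrite !env_ge.
rewrite (env_rev _ (lt_pk : p.+1 < k.+1)) (env_rev _ lt_pk) /snoc.
case: unliftP => [j /(congr1 val) /= E|/(congr1 val) /= E]; last lia.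
by congr x; apply: val_inj => /=; have := ltn_ord j; move: E; rewrite /bump /=; case: leqP; lia.
Qed.

Definition definable k (P : (nat -> M) -> Prop) := D k (fun x => P (env x)).

Lemma definable_ext k (P Q : (nat -> M) -> Prop) :
  (forall v, P v <-> Q v) -> definable k P -> definable k Q.
Proof. by move=> PQ; apply: D_equiv => x; exact: PQ. Qed.

Lemma set_of_definable k (S : pset M k) : definable k (fun v => S (tup_of k v)) -> D k S.
Proof. by apply: D_equiv => x; rewrite tup_of_env. Qed.

Lemma definable_of_set k (S : pset M k) : D k S -> definable k (fun v => S (tup_of k v)).
Proof. by apply: D_equiv => x; rewrite tup_of_env. Qed.

Lemma definable_False k : definable k (fun _ => False).
Proof. exact: (st_empty HD k). Qed.

Lemma definable_not k P : definable k P -> definable k (fun v => ~ P v).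
Proof. exact: (st_compl HD). Qed.

Lemma definable_or k P Q : definable k P -> definable k Q -> definable k (fun v => P v \/ Q v).
Proof. exact: (st_union HD). Qed.

Lemma definable_True k : definable k (fun _ => True).
Proof. by apply: definable_ext (definable_not (definable_False k)) => v; tauto. Qed.

Lemma definable_prop k (P : Prop) : definable k (fun _ => P).
Proof.
have [p|np] := classic P.
  by apply: definable_ext (definable_True k) => v; tauto.
by apply: definable_ext (definable_False k) => v; tauto.
Qed.

Lemma definable_and k P Q : definable k P -> definable k Q -> definable k (fun v => P v /\ Q v).
Proof.
move=> dP dQ.
apply: definable_ext (definable_not (definable_or (definable_not dP) (definable_not dQ))) => v.
by split=> [PQ|]; [split; apply: NNPP; tauto | tauto].
Qed.

Lemma definable_imp k P Q : definable k P -> definable k Q -> definable k (fun v => P v -> Q v).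
Proof.
move=> dP dQ; apply: definable_ext (definable_or (definable_not dP) dQ) => v.
by split=> [|PQ]; [tauto | have := classic (P v); tauto].
Qed.

Lemma definable_ex k (Q : M -> (nat -> M) -> Prop) :
  definable k.+1 (fun w => Q (w 0) (vshift 1 w)) -> definable k (fun v => exists y, Q y v).
Proof.
move/(st_proj HD); apply: D_equiv => x /=.
by split=> -[y Qy]; exists y; move: Qy; rewrite env_snoc.
Qed.

Lemma definable_all k (Q : M -> (nat -> M) -> Prop) :
  definable k.+1 (fun w => Q (w 0) (vshift 1 w)) -> definable k (fun v => forall y, Q y v).
Proof.
move=> dQ.
apply: definable_ext (definable_not (@definable_ex k (fun y v => ~ Q y v) (definable_not dQ))) => v.
split=> [nQ y|allQ [y]]; last exact.
by apply: NNPP => nQy; apply: nQ; exists y.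
Qed.

Definition depends_below k (P : (nat -> M) -> Prop) :=
  forall v w, (forall p, p < k -> v p = w p) -> (P v <-> P w).

Lemma definable_widen k k' P : definable k P -> depends_below k P -> k <= k' -> definable k' P.
Proof.
move=> dP depP; elim: k' => [|k' IH] le_kk'.
  by have <- : k = 0 by lia.
have [lt_kk'|ge_kk'] := ltnP k k'.+1; last by have <- : k = k'.+1 by lia.
have /(st_prodl HD) := IH (ltac:(lia)); apply: D_equiv => x /=.
apply: depP => p lt_pk; have lt_pk' : p < k' by lia.
rewrite (env_rev _ lt_pk') (env_rev _ (leqW lt_pk')); congr x; apply: val_inj => /=.
by rewrite /bump /=; lia.
Qed.

Lemma definable_var_eq k p q : p < k -> q < k -> definable k (fun v => v p = v q).
Proof.
move=> lt_pk lt_qk; have := st_diag HD (rev_ord (Ordinal lt_pk)) (rev_ord (Ordinal lt_qk)).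
by apply: D_equiv => x; rewrite !env_rev.
Qed.

Lemma definable_var_const k p c : p < k -> definable k (fun v => v p = c).
Proof.
move=> lt_pk.
have d0 : definable 1 (fun v => v 0 = c).
  have := st_point HD c; apply: D_equiv => x.
  by rewrite (env_rev _ (ltn0Sn 0)) (ord1_eq (rev_ord _)).
apply: definable_ext (@definable_ex k (fun y v => y = c /\ y = v p) _) => [v|].
  by split=> [[y [<- <-]]|<-]; last exists (v p).
apply: definable_and; first by apply: definable_widen d0 _ _ => [v w vw|]; [rewrite vw | lia].
by apply: definable_var_eq; lia.
Qed.

Inductive term := Var of nat | Cst of M.

Definition eval (v : nat -> M) (t : term) : M := match t with Var p => v p | Cst c => c end.
Definition term_below k (t : term) : Prop := if t is Var p then p < k else True.

Definition is_term k (e : (nat -> M) -> M) := exists2 t, term_below k t & forall v, e v = eval v t.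

Lemma definable_eq k e1 e2 : is_term k e1 -> is_term k e2 -> definable k (fun v => e1 v = e2 v).
Proof.
move=> [s bs e1E] [t bt e2E].
apply: (@definable_ext k (fun v => eval v s = eval v t)) => [v|]; first by rewrite e1E e2E.
case: s t bs bt {e1E e2E} => [p|c] [q|d] /= bs bt.
- exact: definable_var_eq.
- exact: definable_var_const.
- by apply: definable_ext (definable_var_const c bt) => v; split=> ->.
- exact: definable_prop.
Qed.

Lemma definable_all_ord k a (P : 'I_a -> (nat -> M) -> Prop) :
  (forall j, definable k (P j)) -> definable k (fun v => forall j, P j v).
Proof.
move=> dP; have dP_seq (s : seq 'I_a) : definable k (fun v => forall j, j \in s -> P j v).
  elim: s => [|j s IH].
    by apply: definable_ext (definable_True k) => v; split=> // _ j; rewrite in_nil.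
  apply: definable_ext (definable_and (dP j) IH) => v; split.
    by case=> Pj Ps j'; rewrite in_cons => /orP [/eqP ->|]; [|apply: Ps].
  by move=> Ps; split=> [|j' s_j']; apply: Ps; rewrite in_cons ?eqxx ?s_j' ?orbT.
apply: definable_ext (dP_seq (enum 'I_a)) => v.
by split=> Ps j => [|_]; apply: Ps; rewrite ?mem_enum.
Qed.

Lemma definable_ex_tup a k (Q : tup M a -> (nat -> M) -> Prop) :
  definable (a + k) (fun w => Q (tup_of a w) (vshift a w)) ->
  definable k (fun v => exists y : tup M a, Q y v).
Proof.
elim: a k Q => [|a IH] k Q dQ.
  apply: definable_ext dQ => v; split=> [Qv|[y]]; first by exists (tup_of 0 v).
  by have -> : y = tup_of 0 v by apply: tup_ext => -[].
have snoc_tup_of (w : nat -> M) : tup_of a.+1 w = snoc (tup_of a (vshift 1 w)) (w 0).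
  apply: tup_ext => j; rewrite /snoc /tup_of /vshift; case: unliftP => [j' ->|->].
    by rewrite lift_max; congr w; have := ltn_ord j' => /= ?; lia.
  by rewrite /= subnn.
have snoc_split (y : tup M a.+1) : y = snoc (fun j => y (widen_ord (leqnSn a) j)) (y ord_max).
  apply: tup_ext => j; rewrite /snoc; case: unliftP => [j' ->|->] //.
  by congr y; apply: val_inj; exact: lift_max.
have /(IH k (fun y' v => exists z, Q (snoc y' z) v)) :
    definable (a + k) (fun w => exists z, Q (snoc (tup_of a w) z) (vshift a w)).
  apply: (@definable_ex (a + k) (fun z w => Q (snoc (tup_of a w) z) (vshift a w))).
  by apply: definable_ext dQ => w; rewrite snoc_tup_of.
apply: definable_ext => v; split=> [[y' [z Qyz]]|[y Qy]]; first by exists (snoc y' z).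
by exists (fun j => y (widen_ord (leqnSn a) j)), (y ord_max); rewrite -snoc_split.
Qed.

Lemma definable_all_tup a k (Q : tup M a -> (nat -> M) -> Prop) :
  definable (a + k) (fun w => Q (tup_of a w) (vshift a w)) ->
  definable k (fun v => forall y : tup M a, Q y v).
Proof.
move=> dQ; have := definable_not (@definable_ex_tup a k (fun y v => ~ Q y v) (definable_not dQ)).
apply: definable_ext => v.
split=> [nQ y|allQ [y]]; last exact.
by apply: NNPP => nQy; apply: nQ; exists y.
Qed.

Lemma definable_atom a (A : pset M a) k (h : (nat -> M) -> tup M a) :
  D a A -> (forall j, is_term k (fun v => h v j)) -> definable k (fun v => A (h v)).
Proof.
move=> dA /fin_all_exists2 [g g_below hE].
have {}hE v : h v = fun j => eval v (g j) by apply: tup_ext => j; rewrite hE.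
apply: (@definable_ext k (fun v => exists y : tup M a, A y /\ forall j, y j = eval v (g j))).
  move=> v.
  by rewrite hE; split=> [[y [Ay yE]]|Ah]; [rewrite -(tup_ext yE) | exists (fun j => eval v (g j))].
apply: definable_ex_tup; apply: definable_and.
  apply: definable_widen (definable_of_set dA) _ _ => [v w vw|]; last lia.
  by have -> : tup_of a v = tup_of a w by apply: tup_ext => j; apply: vw; have := ltn_ord j; lia.
apply: definable_all_ord => j; apply: definable_eq.
  by exists (Var (a - j.+1)) => //=; have := ltn_ord j; lia.
have := g_below j; case: (g j) => [p|c] /= bp.
  by exists (Var (a + p)) => //=; lia.
by exists (Cst c).
Qed.

End Formulas.

Arguments definable {M} D a0 k P.

Ltac bound_ords := repeat match goal with
  | o : 'I_?n |- _ => lazymatch goal with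
      | _ : is_true (nat_of_ord o < n) |- _ => fail
      | _ => have := ltn_ord o; intro end
  end.

Ltac case_coords := repeat match goal with
  | |- context[split ?j] => let j' := fresh "j" in let E := fresh "E" in case: (splitP j) => j' E
  | |- context[?a == ?b] => let E := fresh "E" in case: (@eqP _ a b) => E
  | |- context[unlift ord_max ?j] => let j' := fresh "j" in let E := fresh "E" in
      case: (unliftP ord_max j) => [j' /(congr1 val) /= E | /(congr1 val) /= E]
  end.

Ltac term_tac :=
  intros; rewrite /is_term /upd /concat /fstp /sndp /snoc /tup_of /vshift /=; case_coords;
  first [ eexists (Var _); [ | move=> ?; reflexivity ]
        | eexists (Cst _); [ | move=> ?; reflexivity ] ];
  rewrite /term_below; bound_ords; try lia.

Section Atoms.
Context {M : Type} {D : forall n, pset M n -> Prop} {a0 : M}.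
Arguments D : clear implicits.
Hypothesis HD : is_structure D.

Lemma definable_rel2 (R : M -> M -> Prop) k (e1 e2 : (nat -> M) -> M) :
  D 2 (fun x => R (x ord0) (x ord_max)) -> is_term k e1 -> is_term k e2 ->
  definable D a0 k (fun v => R (e1 v) (e2 v)).
Proof.
move=> dR t1 t2.
refine (definable_atom (h := fun v j => if val j == 0 then e1 v else e2 v) HD dR _).
by move=> -[[|[|]]].
Qed.

Lemma definable_graph_rel n (R : tup M n -> M -> Prop) k
    (hx : (nat -> M) -> tup M n) (hu : (nat -> M) -> M) :
  D (n + 1) (fun z => R (fstp z) (sndp z ord0)) ->
  (forall j, is_term k (fun v => hx v j)) -> is_term k hu ->
  definable D a0 k (fun v => R (hx v) (hu v)).
Proof.
move=> dR thx thu.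
apply: definable_ext (definable_atom (h := fun v => concat (hx v) (fun _ => hu v)) HD dR _) => [v|].
  by rewrite fstp_concat sndp_concat.
by move=> j; rewrite /concat; case: splitP => j' _; [exact: thx | exact: thu].
Qed.

End Atoms.

Ltac definable_step HD :=
  first [ apply: (definable_prop HD)
        | apply: (definable_eq HD); term_tac
        | match goal with H : _ |- _ => apply: (definable_rel2 HD H); term_tac end
        | match goal with H : _ |- _ => apply: (definable_atom HD H); term_tac end
        | match goal with H : _ |- _ => apply: (definable_graph_rel HD H); term_tac end
        | apply: (definable_and HD)
        | apply: (definable_or HD)
        | apply: (definable_not HD)
        | apply: (definable_imp HD)
        | apply: (definable_ex HD)
        | apply: (definable_all HD)
        | apply: (definable_ex_tup HD)
        | apply: (definable_all_tup HD)
        | apply: (definable_all_ord HD); intro ].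

(* [by_formula HD a0] proves [D n S] by reading [S] as a first-order formula: connectives and
   quantifiers are peeled off, and each atom is matched against a set of [D] from the context,
   with coordinates, bound variables and parameters substituted as terms. *)
Ltac by_formula HD a0 := apply: (set_of_definable (a0 := a0)); repeat definable_step HD.

Definition graph1 (M : Type) n (X : pset M n) (f : tup M n -> M) : pset M (n + 1) :=
  graph X (fun x (_ : 'I_1) => f x).

Lemma graph1_concat (M : Type) n (X : pset M n) (f : tup M n -> M) x c :
  graph1 X f (concat x (fun _ => c)) <-> X x /\ c = f x.
Proof.
rewrite /graph1 /graph fstp_concat sndp_concat.
by split=> [[Xx /(_ ord0)]|[Xx ->]].
Qed.

Definition ole (a b : option nat) : Prop :=
  match a, b with
  | None, _ => True
  | Some _, None => False
  | Some x, Some y => x <= y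
  end.

Lemma ole_omaxl a b : ole a (omax a b).
Proof. by case: a => [x|] //; case: b => [y|] //=; lia. Qed.

Lemma olt_ole a b k : ole a b -> olt b k -> olt a k.
Proof. by case: a => [x|] //; case: b => [y|] //=; lia. Qed.

Lemma olt_omax a b k : olt a k -> olt b k -> olt (omax a b) k.
Proof. by case: a => [x|] //; case: b => [y|] //=; lia. Qed.

Lemma olt_le a k k' : olt a k -> k <= k' -> olt a k'.
Proof. by case: a => [x|] //=; lia. Qed.

Lemma olt_bound a b c : (forall d, b = Some d -> olt a d) -> ole a b -> ole b (Some c) -> olt a c.
Proof. by case: b => [d|] ab_lt ab bc; [exact: olt_le (ab_lt d erefl) bc | case: a ab {ab_lt}]. Qed.

Section DenseOrder.
Variables (M : Type) (lt : M -> M -> Prop).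
Hypothesis Hlo : dlo lt.

Definition lte x y := lt x y \/ x = y.

Definition has_interval (A : M -> Prop) := exists a b, lt a b /\ forall u, lt a u -> lt u b -> A u.

Lemma lt_asym x y : lt x y -> ~ lt y x.
Proof. by move=> xy yx; exact: (dlo_irrefl Hlo (dlo_trans Hlo xy yx)). Qed.

Lemma lte_antisym x y : lte x y -> lte y x -> x = y.
Proof. by case=> [xy|//] [yx|//]; case: (lt_asym xy yx). Qed.

Lemma lte_trans x y z : lte x y -> lte y z -> lte x z.
Proof. by case=> [xy|->] // [yz|<-]; left=> //; exact: (dlo_trans Hlo xy yz). Qed.

Lemma lt_lte_trans x y z : lt x y -> lte y z -> lt x z.
Proof. by move=> xy [yz|<-] //; exact: (dlo_trans Hlo xy yz). Qed.

Lemma finite_below p (pts : 'I_p -> M) a :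
  exists2 z, lt z a & forall j, lt (pts j) a -> lte (pts j) z.
Proof.
elim: p pts => [|p IH] pts.
  by have [z za] := dlo_nomin Hlo a; exists z => // -[].
have [z za zmax] := IH (fun j => pts (lift ord0 j)).
have pts_lift j : j != ord0 -> lt (pts j) a -> lte (pts j) z.
  by case: (unliftP ord0 j) => [j' -> _|->]; [exact: zmax | rewrite eqxx].
have [p0a|[p0a|ap0]] := dlo_total Hlo (pts ord0) a.
- have [p0z|z_p0] : lt (pts ord0) z \/ lte z (pts ord0).
    by case: (dlo_total Hlo (pts ord0) z) => [|[->|]]; [left | right; right | right; left].
  + exists z => // j; have [->|/pts_lift] := eqVneq j ord0; [by left | exact].
  exists (pts ord0) => // j; have [->|/pts_lift ptsj /ptsj/lte_trans] := eqVneq j ord0.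
    by right.
  exact.
- exists z => // j; have [->|/pts_lift] := eqVneq j ord0; last exact.
  by rewrite p0a => /(dlo_irrefl Hlo).
- exists z => // j; have [->|/pts_lift] := eqVneq j ord0; last exact.
  by move/lt_asym.
Qed.

End DenseOrder.

Definition line (M : Type) (A : M -> Prop) : pset M 1 := fun t => A (t ord0).

Definition saturate (M : Type) n (i : 'I_n) (Z : pset M n) : pset M n :=
  fun x => exists u, Z (upd i x u).

Definition disagree (M : Type) n (X : pset M n) (f F : tup M n -> M) : pset M n :=
  fun x => X x /\ f x <> F x.

Lemma graph1_def (M : Type) (D : forall n, pset M n -> Prop) n
    (R : tup M n -> M -> Prop) (F : tup M n -> M) :
  (forall x, R x (F x)) -> (forall x c c', R x c -> R x c' -> c = c') ->
  D (n + 1) (fun z => R (fstp z) (sndp z ord0)) -> D (n + 1) (graph1 (fun _ => True) F).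
Proof.
move=> RF R_fun; apply: D_equiv => z; split=> [Rz|[_ /(_ ord0) ->] //].
by split=> // j; rewrite (ord1_eq j); exact: R_fun Rz (RF _).
Qed.

Lemma choice_fun (A B : Type) (R : A -> B -> Prop) :
  (forall x, exists y, R x y) -> exists F, forall x, R x (F x).
Proof.
move=> R_tot; exists (fun x => proj1_sig (constructive_indefinite_description _ (R_tot x))) => x.
by case: constructive_indefinite_description.
Qed.

Lemma closure_compl_open (M : Type) (lt : M -> M -> Prop) n (X : pset M n) :
  is_open lt (fun x => ~ Defs.closure lt X x).
Proof.
move=> x nclx; have [a [b [abx nX]]] : exists a b, box lt a b x /\ ~ exists y, box lt a b y /\ X y.
  by apply: NNPP => h; apply: nclx => a b abx; apply: NNPP => nX; apply: h; exists a, b.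
by exists a, b; split=> // y aby cly; apply: nX; exact: cly a b aby.
Qed.

Lemma subset_closure (M : Type) (lt : M -> M -> Prop) n (X : pset M n) x :
  X x -> Defs.closure lt X x.
Proof. by move=> Xx a b abx; exists x. Qed.

Section Expansion.
Variables (M : Type) (lt : M -> M -> Prop).
Variables (DM DN : forall n, pset M n -> Prop) (dim : forall n, pset M n -> option nat).
Arguments DM : clear implicits.
Arguments DN : clear implicits.
Arguments dim : clear implicits.
Hypothesis Hom : o_minimal lt DM.
Hypothesis HN : is_structure DN.
Hypothesis Hexp : expands DM DN.
Hypothesis Hdim : dim_compatible lt DM DN dim.
Variable a0 : M.

Let HM : is_structure DM := om_struct Hom.
Let Hlo : dlo lt := om_dlo Hom.
(* [by_formula] finds the definability of the order in the context. *)
Let dltM : DM 2 (fun x => lt (x ord0) (x ord_max)) := om_lt Hom.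
Let dltN : DN 2 (fun x => lt (x ord0) (x ord_max)) := Hexp dltM.

Lemma dim_ext n (X Y : pset M n) : (forall x, X x <-> Y x) -> dim n X = dim n Y.
Proof. by move=> XY; rewrite (pset_ext XY). Qed.

Lemma dim_mono n (X Y : pset M n) :
  DN n X -> DN n Y -> (forall x, X x -> Y x) -> ole (dim n X) (dim n Y).
Proof.
move=> dX dY XY; have -> : dim n Y = omax (dim n X) (dim n Y).
  by rewrite -(D2 Hdim dX dY); apply: dim_ext => x; split=> [|[/XY|]]; auto.
exact: ole_omaxl.
Qed.

Lemma dim_nonempty n (X : pset M n) x : DN n X -> X x -> exists d, dim n X = Some d.
Proof.
move=> dX Xx; case E: (dim n X) => [d|]; first by exists d.
by case: (proj1 (D1_empty Hdim dX) E x).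
Qed.

Lemma dim_setT n : dim n (fun _ => True) = Some n.
Proof.
have dT : DM n (fun _ => True) by apply: D_equiv (st_compl HM (st_empty HM n)) => x; tauto.
have := D5 Hdim dT; case: (dim n (fun _ => True)) => [d|/(_ (fun _ => a0) I)] //=.
move=> [[sigma [inj_sigma _]] dmax].
have le_dn : d <= n by have := leq_card sigma inj_sigma; rewrite !card_ord.
suff : n <= d by move=> le_nd; congr Some; lia.
apply: (dmax n id) => //.
have [am lt_am] := dlo_nomin Hlo a0; have [ap lt_ap] := dlo_nomax Hlo a0.
exists (fun _ => a0); split; first by exists (fun _ => a0).
exists (fun _ => am), (fun _ => ap); split=> [i|y _]; [by [] | by exists y].
Qed.

Lemma dim_line_le (X : pset M 1) : DN 1 X -> ole (dim 1 X) (Some 1).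
Proof.
move=> dX; rewrite -(D1_line Hdim); apply: dim_mono => //.
by apply: D_equiv (st_compl HN (st_empty HN 1)) => x; tauto.
Qed.

Lemma has_interval_dim (A : M -> Prop) :
  DM 1 (line A) -> (has_interval lt A <-> dim 1 (line A) = Some 1).
Proof.
move=> dA; have odim := D5 Hdim dA; have le1 := dim_line_le (Hexp dA).
split=> [[a [b [lt_ab Aab]]]|dim1].
  have [u [au ub]] := dlo_dense Hlo lt_ab.
  have [d dE] := dim_nonempty (x := fun _ => u) (Hexp dA) (Aab u au ub).
  move: le1 odim; rewrite dE /= => le_d1 [_ dmax]; congr Some.
  suff : 1 <= d by lia.
  apply: (dmax 1 id) => //; exists (fun _ => u).
  split; first by exists (fun _ => u); split=> //; exact: Aab.
  exists (fun _ => a), (fun _ => b); split=> [i|y yab]; first by [].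
  by exists y; split=> //; have [] := yab ord0; exact: Aab.
move: odim; rewrite dim1 => -[[sigma [_ [x [_ [a [b [xab ab_sub]]]]]]] _].
exists (a ord0), (b ord0); split; first by have [] := xab ord0; exact: (dlo_trans Hlo).
move=> u au ub; have [x' [Ax' /(_ ord0) ->]] : cproj sigma (line A) (fun _ => u).
  by apply: ab_sub => i; rewrite (ord1_eq i).
by rewrite (ord1_eq (sigma ord0)).
Qed.

Lemma dim_line_no_interval (A : M -> Prop) :
  DM 1 (line A) -> ~ has_interval lt A -> ole (dim 1 (line A)) (Some 0).
Proof.
move=> dA noint; have := dim_line_le (Hexp dA).
case E: (dim 1 (line A)) => [[|[|d]]|] //= _.
by case: noint; apply/(has_interval_dim dA).
Qed.

Lemma finite_of_no_interval (A : M -> Prop) : DM 1 (line A) -> ~ has_interval lt A ->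
  exists p (pts : 'I_p -> M), forall u, A u -> exists j, u = pts j.
Proof.
move=> dA noint; have [p [q [pts [ivs Adec]]]] := om_omin Hom dA.
exists p, pts => u Au; case: (proj1 (Adec (fun _ => u)) Au) => [//|[j [uj1 uj2]]].
case: noint.
have [a [au a_sub]] : exists a, lt a u /\
    forall w, lt a w -> match (ivs j).1 with Some a => lt a w | None => True end.
  by case: (ivs j).1 uj1 => [a' ?|_]; [exists a' | have [a ?] := dlo_nomin Hlo u; exists a].
have [b [ub b_sub]] : exists b, lt u b /\
    forall w, lt w b -> match (ivs j).2 with Some b => lt w b | None => True end.
  by case: (ivs j).2 uj2 => [b' ?|_]; [exists b' | have [b ?] := dlo_nomax Hlo u; exists b].
exists a, b; split=> [|w aw wb]; first exact: (dlo_trans Hlo au ub).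
by apply: (proj2 (Adec (fun _ => w))); right; exists j; split; [exact: a_sub | exact: b_sub].
Qed.

Lemma line_def n (R : tup M n -> M -> Prop) (D : forall n, pset M n -> Prop) (t : tup M n) :
  is_structure D -> D (n + 1) (fun z => R (fstp z) (sndp z ord0)) -> D 1 (line (R t)).
Proof.
by move=> HD dR; rewrite /line; by_formula HD a0.
Qed.

Lemma saturate_def (D : forall n, pset M n -> Prop) n (i : 'I_n) (Z : pset M n) :
  is_structure D -> D n Z -> D n (saturate i Z).
Proof. by move=> HD dZ; rewrite /saturate; by_formula HD a0. Qed.

Lemma dim_line_through n (i : 'I_n) (x : tup M n) (U : pset M 1) : DN 1 U ->
  dim n (fun w => (forall j, j != i -> w j = x j) /\ U (fun _ => w i)) = dim 1 U.
Proof.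
move=> dU; symmetry; apply: (D4 Hdim (f := fun u => upd i x (u ord0))) => //.
- by by_formula HN a0.
- by by_formula HN a0.
- move=> u Uu; split=> [j ji|]; first by rewrite upd_ne.
  by rewrite upd_at; congr U: Uu; apply: tup_ext => o; rewrite (ord1_eq o).
- move=> u u' _ _ /(congr1 (fun w => w i)); rewrite !upd_at => uu'.
  by apply: tup_ext => o; rewrite (ord1_eq o).
- move=> w [wx Uw]; exists (fun _ => w i); split=> //.
  by apply: tup_ext => j; rewrite /upd; case: eqP => [->|/eqP/wx].
Qed.

Section LineFamily.
Variables (n : nat) (i : 'I_n) (I : pset M n) (R : tup M n -> M -> Prop).
Hypothesis dI : DN n I.
Hypothesis dR : DN (n + 1) (fun z => R (fstp z) (sndp z ord0)).
Hypothesis R_inj : forall x x' u u',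
  I x -> I x' -> R x u -> R x' u' -> upd i x u = upd i x' u' -> x = x'.

(* The family of the sets {upd i x u | R x u}, x in I, in the form required by (D3). *)
Let W : pset M (n + n) := fun z =>
  I (fstp z) /\ exists u, R (fstp z) u /\ forall j, sndp z j = upd i (fstp z) u j.

Let dW : DN (n + n) W.
Proof. by by_formula HN a0. Qed.

Let W_disjoint t t' : I t -> I t' -> t <> t' -> forall x, ~ (fiber W t x /\ fiber W t' x).
Proof.
move=> It It' tt' x; rewrite /fiber /W !fstp_concat !sndp_concat.
case=> [[_ [u [Ru xE]]] [_ [u' [Ru' xE']]]]; apply: tt'; apply: (R_inj It It' Ru Ru').
by apply: tup_ext => j; rewrite -xE -xE'.
Qed.

Let dim_W_fiber t : I t -> dim n (fiber W t) = dim 1 (line (R t)).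
Proof.
move=> It; rewrite -(dim_line_through i t (line_def t HN dR)).
apply: dim_ext => w; rewrite /fiber /W fstp_concat sndp_concat /line.
split=> [[_ [u [Ru wE]]]|[wt Rw]].
  by split=> [j ji|]; rewrite wE ?upd_at // upd_ne.
split=> //; exists (w i); split=> // j.
by rewrite /upd; case: eqP => [->|/eqP/wt].
Qed.

Lemma line_family_level_def d : DN n (fun x => I x /\ dim 1 (line (R x)) = d).
Proof.
have := D3a Hdim dI dW W_disjoint d; apply: D_equiv => x.
by split=> -[Ix dE]; split; rewrite // ?(dim_W_fiber Ix) // -(dim_W_fiber Ix).
Qed.

Lemma line_family_dim e : (forall x, I x -> dim 1 (line (R x)) = Some e) ->
  dim n (fun w => exists x, I x /\ exists u, R x u /\ w = upd i x u) = oadd (dim n I) (Some e).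
Proof.
move=> dimR; rewrite -(D3b Hdim dI dW W_disjoint (fun t It => etrans (dim_W_fiber It) (dimR t It))).
apply: dim_ext => w; rewrite /fiber /W; split=> [[x [Ix [u [Ru ->]]]]|[t [It]]].
  by exists x; rewrite fstp_concat sndp_concat; split=> //; split=> //; exists u.
rewrite fstp_concat sndp_concat => -[_ [u [Ru wE]]].
by exists t; split=> //; exists u; split=> //; exact: tup_ext.
Qed.

End LineFamily.

Definition shadow n (i : 'I_n) (Z : pset M n) : pset M n := fun p => p i = a0 /\ saturate i Z p.

Lemma dim_line_fibres n (i : 'I_n) (Z : pset M n) e : DN n Z ->
  (forall x, Z x -> dim 1 (line (fun u => Z (upd i x u))) = Some e) ->
  dim n Z = oadd (dim n (shadow i Z)) (Some e).
Proof.
move=> dZ dimZ.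
have dS : DN n (shadow i Z) by have := saturate_def i HN dZ; rewrite /shadow => ?; by_formula HN a0.
have dR : DN (n + 1) (fun z => Z (upd i (fstp z) (sndp z ord0))) by by_formula HN a0.
have R_inj x x' u u' : shadow i Z x -> shadow i Z x' -> Z (upd i x u) -> Z (upd i x' u') ->
    upd i x u = upd i x' u' -> x = x'.
  move=> [xi _] [x'i _] _ _ E; apply: tup_ext => j.
  have [->|ji] := eqVneq j i; first by rewrite xi x'i.
  by rewrite -(upd_ne x u ji) E upd_ne.
rewrite -(line_family_dim (R := fun x u => Z (upd i x u)) dS dR R_inj) => [|x [_ [u Zu]]].
  apply: dim_ext => w; split=> [Zw|[x [_ [u [Zu ->]]]] //].
  exists (upd i w a0); split.
    by split; [exact: upd_at | exists (w i); rewrite upd_upd upd_id].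
  by exists (w i); rewrite upd_upd upd_id.
by rewrite -(dimZ _ Zu); apply: dim_ext => t; rewrite /line upd_upd.
Qed.

Lemma dim_saturate n (i : 'I_n) (Z : pset M n) : DN n Z ->
  dim n (saturate i Z) = oadd (dim n (shadow i Z)) (Some 1).
Proof.
move=> dZ; rewrite (dim_line_fibres (i := i) (e := 1) (saturate_def i HN dZ)) => [|x [u Zu]].
  congr oadd; apply: dim_ext => p; rewrite /shadow /saturate.
  split=> -[pi [u Zu]]; split=> //; last by exists u, u; rewrite upd_upd.
  by move: Zu => [w]; rewrite upd_upd; exists w.
rewrite -(D1_line Hdim); apply: dim_ext => t; rewrite /line /saturate; split=> // _.
by exists u; rewrite upd_upd.
Qed.

Lemma disagree_def n (X : pset M n) (f F : tup M n -> M) :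
  DN (n + 1) (graph1 X f) -> DN (n + 1) (graph1 (fun _ => True) F) -> DN n (disagree X f F).
Proof.
move=> dXf dF.
have : DN n (fun x => exists c, graph1 X f (concat x (fun _ => c)) /\
                                ~ graph1 (fun _ => True) F (concat x (fun _ => c))).
  by by_formula HN a0.
apply: D_equiv => x; rewrite /disagree; split=> [[c []]|[Xx fF]].
  by rewrite !graph1_concat => -[Xx ->] FE; split=> // E; apply: FE.
by exists (f x); rewrite !graph1_concat; split=> // -[].
Qed.

Lemma closure_def_L n (X : pset M n) :
  open_definable_L lt DM DN -> DN n X -> DM n (Defs.closure lt X).
Proof.
move=> Hopen dX.
have dcl : DN n (Defs.closure lt X) by rewrite /Defs.closure /box; by_formula HN a0.
have := st_compl HM (Hopen _ _ (st_compl HN dcl) (@closure_compl_open _ lt n X)).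
by apply: D_equiv => x; split=> [/NNPP|]; tauto.
Qed.

Definition cylinder n (i : nat) (C : pset M n) :=
  forall x y, (forall j : 'I_n, j < i -> x j = y j) -> C x -> C y.

Definition approximable n (C X : pset M n) (f : tup M n -> M) :=
  exists F, DM (n + 1) (graph1 (fun _ => True) F) /\
    forall c, dim n C = Some c -> olt (dim n (disagree X f F)) c.

Definition approximation n i := forall (C X : pset M n) (f : tup M n -> M),
  DM n C -> cylinder i C -> DN n X -> (forall x, X x -> C x) ->
  DN (n + 1) (graph1 X f) -> approximable C X f.

Lemma cylinder_top n (C : pset M n) : cylinder n C.
Proof. by move=> x y xy Cx; have -> : y = x by apply: tup_ext => j; symmetry; apply: xy. Qed.

Lemma dim_cylinder0 n (C : pset M n) c : DM n C -> cylinder 0 C -> dim n C = Some c -> c = n.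
Proof.
move=> dC cylC dimC; have [x0 Cx0] : exists x0, C x0.
  apply: NNPP => noC; move: dimC; rewrite (proj2 (D1_empty Hdim (Hexp dC))) // => x Cx.
  by apply: noC; exists x.
suff : dim n C = Some n by rewrite dimC => -[].
by rewrite -(dim_setT n); apply: dim_ext => x; split=> // _; exact: cylC Cx0.
Qed.

Lemma approximation0 n : approximation n 0.
Proof.
move=> C X f dC cylC dX XC dXf.
pose g x := if excluded_middle_informative (X x) then f x else a0.
have dg : DN (n + 1) (graph1 (fun _ => True) g).
  apply: (graph1_def (R := fun x c => (X x /\ c = f x) \/ (~ X x /\ c = a0))).
  - by move=> x; rewrite /g; case: excluded_middle_informative; [left | right].
  - by move=> x c c' [[Xx ->]|[nXx ->]] [[Xx' ->]|[nXx' ->]].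
  have : DN (n + 1) (fun z => graph1 X f (concat (fstp z) (fun _ => sndp z ord0)) \/
                             (~ X (fstp z) /\ sndp z ord0 = a0)).
    by by_formula HN a0.
  by apply: D_equiv => z; rewrite graph1_concat.
have [F [dF [S [dS [dimS gF]]]]] := D6 Hdim dg.
exists F; split=> // c /(dim_cylinder0 dC cylC) dimC; rewrite dimC.
apply: olt_ole dimS; apply: (dim_mono (disagree_def dXf (Hexp dF)) dS) => x [Xx fF].
by apply: NNPP => nSx; apply: fF; rewrite -gF // /g; case: excluded_middle_informative.
Qed.

Section Step.
Variables (n : nat) (i : 'I_n) (C X : pset M n) (f : tup M n -> M).
Hypothesis dC : DM n C.
Hypothesis cylC : cylinder i.+1 C.
Hypothesis dX : DN n X.
Hypothesis XC : forall x, X x -> C x.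
Hypothesis dXf : DN (n + 1) (graph1 X f).

Definition cfibre x u := C (upd i x u).
Definition thick x := C x /\ has_interval lt (cfibre x).
Definition thin x := C x /\ ~ has_interval lt (cfibre x).

Definition next_pt x y := thin (upd i x y) /\ lte lt (x i) y /\
  forall y', thin (upd i x y') -> lte lt (x i) y' -> lte lt y y'.
Definition next x := epsilon (inhabits a0) (next_pt x).
Definition Xnext x := exists y, next_pt x y /\ X (upd i x y).
Definition fnext x := f (upd i x (next x)).
Definition Xthick x := X x /\ thick x.
Definition Xthin x := X x /\ thin x.

Lemma cfibre_upd x w : cfibre (upd i x w) = cfibre x.
Proof. by apply: functional_extensionality => u; rewrite /cfibre upd_upd. Qed.

Lemma cfibre_def x : DM 1 (line (cfibre x)).
Proof. by apply: line_def HM _; rewrite /cfibre; by_formula HM a0. Qed.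

Lemma cfibre_below x y w : (forall j : 'I_n, j < i -> x j = y j) -> cfibre x w <-> cfibre y w.
Proof.
move=> xy; split; apply: cylC => j lt_ji; rewrite /upd; case: eqP => // /eqP ji;
  [|symmetry]; apply: xy; have : j != i :> nat by []; lia.
Qed.

Lemma thick_def : DM n thick.
Proof. by rewrite /thick /has_interval /cfibre; by_formula HM a0. Qed.

Lemma thin_def : DM n thin.
Proof. by rewrite /thin /has_interval /cfibre; by_formula HM a0. Qed.

Lemma next_pt_def : DM (n + 1) (fun z => next_pt (fstp z) (sndp z ord0)).
Proof. by have := thin_def; rewrite /next_pt /lte => ?; by_formula HM a0. Qed.

Lemma Xthick_def : DN n Xthick.
Proof. by have := Hexp thick_def; rewrite /Xthick => ?; by_formula HN a0. Qed.

Lemma Xthin_def : DN n Xthin.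
Proof. by have := Hexp thin_def; rewrite /Xthin => ?; by_formula HN a0. Qed.

Lemma Xnext_def : DN n Xnext.
Proof. by have := Hexp next_pt_def; rewrite /Xnext => ?; by_formula HN a0. Qed.

Lemma graph_Xthick_def : DN (n + 1) (graph1 Xthick f).
Proof.
have := Hexp thick_def => ?.
have : DN (n + 1) (fun z => graph1 X f z /\ thick (fstp z)) by by_formula HN a0.
by apply: D_equiv => z; rewrite /graph1 /graph /Xthick; tauto.
Qed.

Lemma next_pt_uniq x y y' : next_pt x y -> next_pt x y' -> y = y'.
Proof.
by move=> [Ty [xy ymin]] [Ty' [xy' ymin']]; apply: (lte_antisym Hlo); [exact: ymin | exact: ymin'].
Qed.

Lemma next_spec x y : next_pt x y -> next x = y.
Proof. by move=> xy; exact: next_pt_uniq (epsilon_spec (inhabits a0) _ (ex_intro _ y xy)) xy. Qed.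

Lemma graph_Xnext_def : DN (n + 1) (graph1 Xnext fnext).
Proof.
have := Hexp next_pt_def => ?.
have : DN (n + 1) (fun z => exists y, next_pt (fstp z) y /\
                              graph1 X f (concat (upd i (fstp z) y) (fun _ => sndp z ord0))).
  by by_formula HN a0.
apply: D_equiv => z; split=> [[y [xy]]|[[y [xy Xy]] /(_ ord0) zE]].
  rewrite graph1_concat => -[Xy fE]; split=> [|j]; first by exists y.
  by rewrite (ord1_eq j) fE /fnext (next_spec xy).
by exists y; rewrite graph1_concat zE /fnext (next_spec xy).
Qed.

Lemma cylinder_thick : cylinder i (saturate i thick).
Proof.
move=> x y xy [u [Cxu [a [b [ab abC]]]]]; exists u; split; first exact/(cfibre_below u xy).
exists a, b; split=> // w aw wb; rewrite cfibre_upd; apply/(cfibre_below w xy).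
by have := abC w aw wb; rewrite cfibre_upd.
Qed.

Lemma cylinder_thin : cylinder i (saturate i thin).
Proof.
move=> x y xy [u [Cxu noint]]; exists u; split; first exact/(cfibre_below u xy).
move=> [a [b [ab abC]]]; apply: noint; exists a, b; split=> // w aw wb.
rewrite cfibre_upd; apply: (proj2 (cfibre_below w xy)).
by rewrite -(cfibre_upd y u); exact: abC.
Qed.

Lemma thick_fibre x : thick x -> (fun u => thick (upd i x u)) = cfibre x.
Proof.
move=> [_ int]; apply: functional_extensionality => u; apply: propositional_extensionality.
by rewrite /thick cfibre_upd; split=> [[]|].
Qed.

Lemma thin_fibre x : thin x -> (fun u => thin (upd i x u)) = cfibre x.
Proof.
move=> [_ noint]; apply: functional_extensionality => u; apply: propositional_extensionality.
by rewrite /thin cfibre_upd; split=> [[]|].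
Qed.

Lemma dim_saturate_thick : dim n (saturate i thick) = dim n thick.
Proof.
rewrite (dim_saturate i (Hexp thick_def)).
rewrite (dim_line_fibres (i := i) (e := 1) (Hexp thick_def)) // => x thx.
by rewrite thick_fibre // -(proj1 (has_interval_dim (cfibre_def x)) (proj2 thx)).
Qed.

Lemma dim_saturate_thin d : dim n thin = Some d -> dim n (saturate i thin) = Some d.+1.
Proof.
rewrite (dim_saturate i (Hexp thin_def)).
rewrite (dim_line_fibres (i := i) (e := 0) (Hexp thin_def)) => [|x thx].
  by case: (dim n (shadow i thin)) => // d' [<-] /=; rewrite addn0 addn1.
rewrite thin_fibre //; have := dim_line_no_interval (cfibre_def x) (proj2 thx).
have Cx : line (cfibre x) (fun _ => x i) by rewrite /line /cfibre upd_id; exact: (proj1 thx).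
by have [[|d'] ->] := dim_nonempty (Hexp (cfibre_def x)) Cx.
Qed.

Section Glue.
Variables F1 Fn : tup M n -> M.
Hypothesis dF1 : DM (n + 1) (graph1 (fun _ => True) F1).
Hypothesis dFn : DM (n + 1) (graph1 (fun _ => True) Fn).
Hypothesis F1_approx :
  forall b, dim n (saturate i thick) = Some b -> olt (dim n (disagree Xthick f F1)) b.
Hypothesis Fn_approx :
  forall b, dim n (saturate i thin) = Some b -> olt (dim n (disagree Xnext fnext Fn)) b.

Definition reaches x u := next_pt (upd i x u) (x i).
Definition avoids c x u := reaches x u /\ Fn (upd i x u) <> c.
Definition left_value x c := ~ has_interval lt (avoids c x).
Definition left_limit x c :=
  (left_value x c /\ forall c', left_value x c' -> c' = c) \/
  (~ (exists c0, left_value x c0 /\ forall c', left_value x c' -> c' = c0) /\ c = a0).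
Definition glued x c := (thick x /\ c = F1 x) \/ (~ thick x /\ left_limit x c).
Definition bad x u := reaches x u /\ disagree Xnext fnext Fn (upd i x u).
Definition Xbad x := Xthin x /\ dim 1 (line (bad x)) = Some 1.

Lemma Fn_graphE x u c :
  ~ graph1 (fun _ => True) Fn (concat (upd i x u) (fun _ => c)) <-> Fn (upd i x u) <> c.
Proof. by rewrite graph1_concat; split=> nE E; apply: nE; [rewrite E | case: E]. Qed.

Lemma avoids_def c : DM (n + 1) (fun z => avoids c (fstp z) (sndp z ord0)).
Proof.
have := next_pt_def => ?.
have : DM (n + 1) (fun z => next_pt (upd i (fstp z) (sndp z ord0)) (fstp z i) /\
   ~ graph1 (fun _ => True) Fn (concat (upd i (fstp z) (sndp z ord0)) (fun _ => c))).
  by by_formula HM a0.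
by apply: D_equiv => z; rewrite Fn_graphE.
Qed.

Lemma left_value_def : DM (n + 1) (fun z => left_value (fstp z) (sndp z ord0)).
Proof.
have := next_pt_def => ?.
have : DM (n + 1) (fun z => ~ exists a b, lt a b /\ forall u, lt a u -> lt u b ->
   next_pt (upd i (fstp z) u) (fstp z i) /\
   ~ graph1 (fun _ => True) Fn (concat (upd i (fstp z) u) (fun _ => sndp z ord0))).
  by by_formula HM a0.
apply: D_equiv => z; rewrite /left_value /has_interval /avoids /reaches.
split=> noint [a [b [ab abE]]]; apply: noint; exists a, b; split=> // u au ub;
  have [] := abE u au ub; by rewrite Fn_graphE.
Qed.

Lemma glued_def : DM (n + 1) (fun z => glued (fstp z) (sndp z ord0)).
Proof.
have := left_value_def => ?; have := thick_def => ?.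
have : DM (n + 1) (fun z =>
    (thick (fstp z) /\ graph1 (fun _ => True) F1 (concat (fstp z) (fun _ => sndp z ord0))) \/
    (~ thick (fstp z) /\ left_limit (fstp z) (sndp z ord0))).
  by rewrite /left_limit; by_formula HM a0.
by apply: D_equiv => z; rewrite graph1_concat /glued; tauto.
Qed.

Lemma glued_fun x c c' : glued x c -> glued x c' -> c = c'.
Proof.
case=> [[? ->]|[? [[lc lc_uniq]|[no_lim ->]]]] [[? ->]|[? [[lc' lc'_uniq]|[no_lim' ->]]]] //.
- exact: lc'_uniq.
- by case: no_lim'; exists c.
- by case: no_lim; exists c'.
Qed.

Lemma glued_tot x : exists c, glued x c.
Proof.
have [thx|nthx] := classic (thick x); first by exists (F1 x); left.
have [[c0 lc0]|no_lim] :=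
  classic (exists c0, left_value x c0 /\ forall c', left_value x c' -> c' = c0).
  by exists c0; right; split=> //; left.
by exists a0; right; split=> //; right.
Qed.

Lemma reaches_Xnext x u : X x -> reaches x u -> Xnext (upd i x u).
Proof. by move=> Xx xu; exists (x i); rewrite upd_upd upd_id. Qed.

Lemma reaches_fnext x u : reaches x u -> fnext (upd i x u) = f x.
Proof. by move=> xu; rewrite /fnext (next_spec xu) upd_upd upd_id. Qed.

Lemma reaches_inj x x' u u' : reaches x u -> reaches x' u' -> upd i x u = upd i x' u' -> x = x'.
Proof.
rewrite /reaches => xu x'u' E; rewrite E in xu.
by rewrite -(upd_id i x) -(upd_upd i x u) E (next_pt_uniq xu x'u') upd_upd upd_id.
Qed.

(* The fibre of [thin] through x is finite, so none of it lies just below x_i. *)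
Lemma reaches_interval x :
  thin x -> exists2 z, lt z (x i) & forall u, lt z u -> lt u (x i) -> reaches x u.
Proof.
move=> [Cx noint]; have [p [pts ptsE]] := finite_of_no_interval (cfibre_def x) noint.
have [z zx zmax] := finite_below Hlo pts (x i).
exists z => // u zu ux; rewrite /reaches /next_pt upd_at upd_upd upd_id.
split=> //; split=> [|y' [Cy' _] uy']; first by left.
rewrite upd_upd in Cy'; have [j yE] := ptsE y' Cy'.
have [y'x|[->|xy']] := dlo_total Hlo y' (x i); [|by right|by left].
have := zmax j; rewrite -yE => /(_ y'x) y'z.
have zy' := lt_lte_trans Hlo zu uy'.
case: y'z => [y'z|y'z]; first by case: (lt_asym Hlo zy' y'z).
by rewrite y'z in zy'; case: (dlo_irrefl Hlo zy').
Qed.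

Lemma bad_def : DN (n + 1) (fun z => bad (fstp z) (sndp z ord0)).
Proof.
have := Hexp next_pt_def => ?.
have := disagree_def graph_Xnext_def (Hexp dFn) => ?.
by rewrite /bad /reaches; by_formula HN a0.
Qed.

Lemma Xbad_def : DN n Xbad.
Proof.
apply: (line_family_level_def Xthin_def bad_def) => x x' u u' _ _ [xu _] [x'u' _].
exact: reaches_inj.
Qed.

Lemma left_value_f x : Xthin x -> ~ Xbad x -> left_value x (f x).
Proof.
move=> Xthx nbad int; have [Xx _] := Xthx.
have dav := line_def x HM (avoids_def (f x)); have dbad := line_def x HN bad_def.
have : ole (Some 1) (dim 1 (line (bad x))).
  rewrite -(proj1 (has_interval_dim dav) int); apply: dim_mono (Hexp dav) dbad _ => t [xt fnE].
  by split=> //; split; [exact: reaches_Xnext | rewrite reaches_fnext // => /esym].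
have := dim_line_le dbad.
by case E: (dim 1 (line (bad x))) => [[|[|?]]|] //= _ _; apply: nbad.
Qed.

Lemma left_value_uniq x c c' : thin x -> left_value x c -> left_value x c' -> c = c'.
Proof.
move=> thx lc lc'; apply: NNPP => cc'.
have [z zx zreach] := reaches_interval thx.
have dc := line_def x HM (avoids_def c); have dc' := line_def x HM (avoids_def c').
have : has_interval lt (fun u => avoids c x u \/ avoids c' x u).
  exists z, (x i); split=> // u zu ux.
  have [E|nE] := classic (Fn (upd i x u) = c); [right | left]; split=> //; try exact: zreach.
  by rewrite E.
move/(has_interval_dim (st_union HM dc dc')); rewrite (D2 Hdim (Hexp dc) (Hexp dc')).
have := dim_line_no_interval dc lc; have := dim_line_no_interval dc' lc'.
by case: (dim 1 (line (avoids c x))) => [[|?]|]; case: (dim 1 (line (avoids c' x))) => [[|?]|].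
Qed.

Lemma glued_agrees F x : (forall x, glued x (F x)) -> Xthin x -> ~ Xbad x -> F x = f x.
Proof.
move=> gF Xthx nbad; have [_ [Cx noint]] := Xthx.
apply: glued_fun (gF x) _; right; split=> [[_ //]|]; left.
split=> [|c' lc']; first exact: left_value_f.
exact: left_value_uniq (conj Cx noint) lc' (left_value_f Xthx nbad).
Qed.

Lemma disagree_glued_sub F : (forall x, glued x (F x)) ->
  forall x, disagree X f F x -> disagree Xthick f F1 x \/ Xbad x.
Proof.
move=> gF x [Xx fF]; have [thx|nthx] := classic (thick x).
  by left; split=> //; case: (gF x) => [[_ <-]|[]].
right; apply: NNPP => nbad; apply: fF; symmetry; apply: glued_agrees gF _ nbad.
by split=> //; split=> [|int]; [exact: XC | apply: nthx; split=> //; exact: XC].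
Qed.

Lemma dim_disagree_thick_lt c : dim n C = Some c -> olt (dim n (disagree Xthick f F1)) c.
Proof.
move=> dimC; apply: (olt_bound (b := dim n thick)).
- by move=> b; rewrite -dim_saturate_thick; exact: F1_approx.
- by apply: dim_mono (disagree_def graph_Xthick_def (Hexp dF1)) (Hexp thick_def) _ => x [[]].
- by rewrite -dimC; apply: dim_mono (Hexp thick_def) (Hexp dC) _ => x [].
Qed.

(* The lines {upd i x u | bad x u}, x in Xbad, are disjoint, of dimension 1, and lie in the
   disagreement set of Fn. *)
Lemma dim_Xbad_lines : ole (oadd (dim n Xbad) (Some 1)) (dim n (disagree Xnext fnext Fn)).
Proof.
have dE := disagree_def graph_Xnext_def (Hexp dFn).
have := bad_def => ?; have := Xbad_def => ?.
have dL : DN n (fun w => exists x, Xbad x /\ exists u, bad x u /\ forall j, w j = upd i x u j).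
  by by_formula HN a0.
have bad_inj x x' u u' :
    Xbad x -> Xbad x' -> bad x u -> bad x' u' -> upd i x u = upd i x' u' -> x = x'.
  by move=> _ _ [xu _] [x'u' _]; exact: reaches_inj.
rewrite -(line_family_dim Xbad_def bad_def bad_inj (e := 1)) => [|x []] //.
apply: dim_mono dE _ => [|w [x [_ [u [[_ Ew] ->]]]] //].
by apply: D_equiv dL => w; split=> -[x [Xbx [u [xu wE]]]]; exists x; split=> //; exists u;
  split=> //; [exact: tup_ext | move=> j; rewrite wE].
Qed.

Lemma dim_Xbad_lt c : dim n C = Some c -> olt (dim n Xbad) c.
Proof.
move=> dimC; apply: (olt_bound (b := dim n thin)).
- move=> d /dim_saturate_thin/Fn_approx/(olt_ole dim_Xbad_lines).
  by case: (dim n Xbad) => [b|] //=; lia.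
- by apply: dim_mono Xbad_def (Hexp thin_def) _ => x [[]].
- by rewrite -dimC; apply: dim_mono (Hexp thin_def) (Hexp dC) _ => x [].
Qed.

Lemma approximable_glued : approximable C X f.
Proof.
have [F gF] := choice_fun glued_tot.
have dF : DM (n + 1) (graph1 (fun _ => True) F) := graph1_def gF glued_fun glued_def.
exists F; split=> // c dimC.
have dE1 := disagree_def graph_Xthick_def (Hexp dF1).
have dU := st_union HN dE1 Xbad_def.
apply: olt_ole (dim_mono (disagree_def dXf (Hexp dF)) dU (disagree_glued_sub gF)) _.
rewrite (D2 Hdim dE1 Xbad_def); apply: olt_omax.
  exact: dim_disagree_thick_lt.
exact: dim_Xbad_lt.
Qed.

End Glue.

Lemma Xthick_sub x : Xthick x -> saturate i thick x.
Proof. by case=> _ thx; exists (x i); rewrite upd_id. Qed.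

Lemma Xnext_sub x : Xnext x -> saturate i thin x.
Proof. by case=> y [[thy _] _]; exists y. Qed.

Lemma approximation_step : approximation n i -> approximable C X f.
Proof.
move=> IH.
have [F1 [dF1 F1_approx]] := IH _ _ _ (saturate_def i HM thick_def) cylinder_thick
  Xthick_def Xthick_sub graph_Xthick_def.
have [Fn [dFn Fn_approx]] := IH _ _ _ (saturate_def i HM thin_def) cylinder_thin
  Xnext_def Xnext_sub graph_Xnext_def.
exact: approximable_glued dF1 dFn F1_approx Fn_approx.
Qed.

End Step.

Lemma approximation_all n i : i <= n -> approximation n i.
Proof.
elim: i => [|i IH] le_in; first exact: approximation0.
move=> C X f dC cylC dX XC dXf.
exact: (approximation_step (i := Ordinal le_in) dC cylC dX XC dXf (IH (ltnW le_in))).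
Qed.

End Expansion.

Theorem lemma2p5 (M : Type) (lt : M -> M -> Prop)
  (DM DN : forall n, pset M n -> Prop) (dim : forall n, pset M n -> option nat) :
  o_minimal lt DM ->
  is_structure DN ->
  expands DM DN ->
  open_definable_L lt DM DN ->
  dim_compatible lt DM DN dim ->
  forall (n k : nat) (X : pset M n) (f : tup M n -> M),
    strongly_large lt DN dim X ->
    dim n X = Some k ->
    DN (n + 1) (graph X (fun x (_ : 'I_1) => f x)) ->
    exists F : tup M n -> M,
      DM (n + 1) (graph (fun _ => True) (fun x (_ : 'I_1) => F x)) /\
      exists S : pset M n,
        DN n S /\ olt (dim n S) k /\ forall x, X x -> ~ S x -> f x = F x.
Proof.
move=> Hom HN Hexp Hopen Hdim n k X f [dX dim_cl] dimX dXf.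
have [a0] := dlo_inhab (om_dlo Hom).
have dcl := closure_def_L Hom HN Hexp a0 Hopen dX.
have [F [dF F_approx]] := approximation_all Hom HN Hexp Hdim a0 (leqnn n)
  dcl (@cylinder_top _ _ _) dX (@subset_closure _ _ _ _) dXf.
exists F; split=> //; exists (disagree X f F); split.
  exact: (disagree_def (X := X) (f := f) HN a0 dXf (Hexp _ _ dF)).
split; first by apply: F_approx; rewrite -dim_cl.
by move=> x Xx nS; apply: NNPP => fF; exact: nS.
Qed.
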